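(* Let $t,k$ be integers with $3\le k\le t$. A sequence $l=(l_1,\dots,l_k)$ with entries in $\{1,\dots,t\}$ maximizes $c(l)$ among all such sequences if and only if: 1. the number $v^*$ of distinct treatments occurring in $l$ maximizes $f(v)$ over $v\in\{2,\dots,t\}$; 2. each treatment occurring in $l$ occurs either $n_-=\lfloor k/v^*\rfloor$ times or $n_+=n_-+1$ times; 3. the number of treatments occurring $n_+$ times in $l$ is $v_+=k-v^*\lfloor k/v^*\rfloor$; 4. the number of treatments occurring $n_-$ times in $l$ is $v_-=v^*-v_+$; 5. for every treatment occurring in $l$, all its occurrences are side by side (consecutive positions, cyclically). Moreover, the maximum value is $f(v^* )$, and $f(v^* )\le k-\sqrt{2k}$, with equality if $\sqrt{2k}$ is an integer.
   Context: For a sequence $l=(l_1,\dots,l_k)$ with entries in $\{1,\dots,t\}$, put $l_0=l_k$; $n_i$ is the number of occurrences of treatment $i$ in $l$ and $m_i$ is the number of $j\in\{1,\dots,k\}$ with $l_{j-1}=l_j=i$ (the sequence is read circularly). Define $c(l)=\frac12\big(k-\frac2k\sum_{i=1}^t n_i^2+\sum_{i=1}^t m_i\big)$ and, for positive integers $v$, $f(v)=-1+k-\frac v2-\big(2-\frac vk\big)\lfloor k/v\rfloor+\frac vk\lfloor k/v\rfloor^2$, where $\lfloor x\rfloor$ is the integer part of $x$. (In the paper, $c(l)$ is the trace of the per-block information bound for total effects $\tau+\lambda$ in the circular block model $\mathbb{E}(Y_{i,j})=\beta_i+\tau_{d(i,j)}+\lambda_{d(i,j-1)}$.) *)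

From mathcomp Require Import all_boot all_order all_algebra.
Set Implicit Arguments. Unset Strict Implicit. Unset Printing Implicit Defensive.
Import Order.TTheory GRing.Theory Num.Theory.

(* Treatments {1,..,t} are represented by 'I_t = {0,..,t-1};
   positions {1,..,k} by 'I_k = {0,..,k-1}; a sequence is l : 'I_k -> 'I_t. *)

Definition nocc (k t : nat) (l : 'I_k -> 'I_t) (i : 'I_t) : nat :=
  #|[set j : 'I_k | l j == i]|.

(* m_i : number of positions j with l_{j-1} = l_j = i, cyclically
   (ord_pred j is the cyclic predecessor, so l_0 = l_k) *)
Definition madj (k t : nat) (l : 'I_k -> 'I_t) (i : 'I_t) : nat :=
  #|[set j : 'I_k | (l (ord_pred j) == i) && (l j == i)]|.

Local Open Scope ring_scope.

Definition cval (R : numFieldType) (k t : nat) (l : 'I_k -> 'I_t) : R :=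
  2^-1 * (k%:R - 2 / k%:R * (\sum_(i : 'I_t) ((nocc l i) ^ 2)%N%:R)
          + \sum_(i : 'I_t) (madj l i)%:R).

Definition fval (R : numFieldType) (k v : nat) : R :=
  -1 + k%:R - v%:R / 2 - (2 - v%:R / k%:R) * (k %/ v)%N%:R
  + v%:R / k%:R * ((k %/ v) ^ 2)%N%:R.

Definition occurring (k t : nat) (l : 'I_k -> 'I_t) : {set 'I_t} :=
  [set i : 'I_t | (0 < nocc l i)%N].

(* all occurrences of i are side by side, cyclically: there is a start s
   such that l_j = i exactly for j in {s, s+1, ..., s+n_i-1} (mod k) *)
Definition contiguous (k t : nat) (l : 'I_k -> 'I_t) (i : 'I_t) : Prop :=
  exists s : 'I_k, forall j : 'I_k,
    (l j == i) = (((j + k - s) %% k)%N < nocc l i)%N.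

From mathcomp Require Import all_boot all_order all_algebra.
From mathcomp Require Import zify ring lra.
Import Order.TTheory GRing.Theory Num.Theory.
Set Implicit Arguments. Unset Strict Implicit. Unset Printing Implicit Defensive.

(* With S = sum_i n_i^2 and M = sum_i m_i we have c(l) = (k + M)/2 - S/k.
   Every occurrence of a treatment either continues a cyclic run, and is then
   counted in M, or starts one; a treatment occurring in l but not everywhere
   starts at least one run.  Hence M + v <= k when v >= 2 treatments occur, with
   equality iff each of them forms a single run.  Since
   n^2 + q(q+1) - (2q+1)n = (n - q)(n - q - 1) >= 0, S is at least its value on
   the balanced partition of k into v parts, with equality iff l is balanced.
   Thus c(l) <= f(v), with equality exactly for balanced sequences made of
   contiguous blocks, and such sequences exist for every 2 <= v <= k, while a
   single treatment gives c(l) <= 0 < f(2).  Finally v S_min >= k^2 yields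
   f(v) <= k - (v/2 + k/v) <= k - sqrt(2k) by AM-GM, with equality at
   v = sqrt(2k). *)

Lemma sqr_affine_leqif n q :
  (2 * q + 1) * n <= n ^ 2 + q * (q + 1) ?= iff (n == q) || (n == q.+1).
Proof.
apply/leqifP; have [->|nq] := eqVneq n q; first by apply/eqP; ring.
have [->|nq1] /= := eqVneq n q.+1; first by apply/eqP; ring.
have [lt_nq|le_qn] := ltnP n q; first nia.
have le_q2n : q.+2 <= n by lia.
nia.
Qed.

(* The sum of squares of the balanced partition of k into v parts: k %% v parts
   equal to k %/ v + 1 and the others equal to k %/ v. *)
Definition sumsq_min (k v : nat) : nat :=
  v * (k %/ v) ^ 2 + k %% v * (2 * (k %/ v) + 1).

Lemma sumsq_min_leqif (I : finType) (A : {pred I}) (n : I -> nat) :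
  let k := \sum_(i in A) n i in let q := k %/ #|A| in
  sumsq_min k #|A| <= \sum_(i in A) n i ^ 2
    ?= iff [forall i in A, (n i == q) || (n i == q.+1)].
Proof.
move=> k q; set v := #|A|.
have := leqif_sum (fun i (_ : i \in A) => sqr_affine_leqif (n i) q).
rewrite big_split /= -big_distrr sum_nat_const /= -/k -/v.
have -> : (2 * q + 1) * k = sumsq_min k v + v * (q * (q + 1)).
  by rewrite /sumsq_min -/q {1}(divn_eq k v) -/q; ring.
by rewrite (mono_leqif (leq_add2r _)).
Qed.

Lemma sqr_leq_mul_sumsq_min k v : 0 < v -> k ^ 2 <= v * sumsq_min k v.
Proof.
move=> v_gt0; rewrite /sumsq_min {1}(divn_eq k v).
have : k %% v <= v by rewrite ltnW // ltn_pmod.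
set q := k %/ v; set r := k %% v; nia.
Qed.

Lemma sumsq_min_id k v : k <= v -> sumsq_min k v = k.
Proof.
rewrite leq_eqVlt => /orP[/eqP <-|lt_kv].
  by rewrite /sumsq_min divnn modnn mul0n addn0; case: k => [|k] //=; rewrite muln1.
by rewrite /sumsq_min divn_small // modn_small //; lia.
Qed.

Lemma sumsq_min2_lt k : 3 <= k -> sumsq_min k 2 < k * k.-1.
Proof.
move=> k_ge3; rewrite /sumsq_min.
have := divn_eq k 2; have : k %% 2 < 2 by rewrite ltn_mod.
set q := k %/ 2; set r := k %% 2 => lt_r2 def_k.
have [r0|r1] : r = 0 \/ r = 1 by lia.
  by rewrite def_k r0 in k_ge3 *; nia.
by rewrite def_k r1 in k_ge3 *; nia.
Qed.

Section TwoValued.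
Variables (I : finType) (A : {set I}) (n : I -> nat) (q : nat).
Hypothesis two_valued : forall i, i \in A -> n i = q \/ n i = q.+1.

Lemma sum_two_valued : \sum_(i in A) n i = #|A| * q + #|[set i in A | n i == q.+1]|.
Proof.
rewrite -sum_nat_const -sum1dep_card big_mkcondr -big_split /=.
apply: eq_bigr => i /two_valued[] ->; last by rewrite eqxx addn1.
by rewrite (ltn_eqF (ltnSn q)) addn0.
Qed.

Lemma card_two_valued :
  #|[set i in A | n i == q]| = #|A| - #|[set i in A | n i == q.+1]|.
Proof.
have -> : [set i in A | n i == q.+1] = A :&: [set i | n i == q.+1].
  by apply/setP => i; rewrite !inE.
rewrite -cardsD; apply: eq_card => i; rewrite !inE.
case A_i: (i \in A); rewrite ?andbF ?andbT //=.
by case: (two_valued A_i) => ->; rewrite eqxx ?(gtn_eqF (ltnSn q)) ?(ltn_eqF (ltnSn q)).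
Qed.

End TwoValued.

Lemma card_ord_lt n c : c <= n -> #|[set j : 'I_n | j < c]| = c.
Proof.
move=> le_cn.
have -> : [set j : 'I_n | j < c] = widen_ord le_cn @: 'I_c.
  apply/setP => j; rewrite inE; apply/idP/imsetP => [lt_jc|[i _ ->]].
    by exists (Ordinal lt_jc) => //; apply: val_inj.
  exact: (ltn_ord i).
by rewrite card_imset ?card_ord // => i i2 /(congr1 val) /= /val_inj.
Qed.

Lemma card_ord_between n c1 c2 : c1 <= c2 <= n ->
  #|[set j : 'I_n | c1 <= j < c2]| = c2 - c1.
Proof.
case/andP=> le_c12 le_c2n.
have -> : [set j : 'I_n | c1 <= j < c2] =
          [set j : 'I_n | j < c2] :\: [set j : 'I_n | j < c1].
  by apply/setP => j; rewrite !inE -leqNgt andbC.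
rewrite cardsD (setIidPr _) ?card_ord_lt //; first exact: leq_trans le_c2n.
by apply/subsetP => j; rewrite !inE => /leq_trans; apply.
Qed.

Lemma downclosed_ordE n (P : {pred 'I_n}) :
    (forall a b : 'I_n, b <= a -> a \in P -> b \in P) ->
  forall a : 'I_n, (a \in P) = (a < #|P|).
Proof.
move=> downP a; apply/idP/idP => [Pa | lt_aP].
  have /subset_leq_card : [set b : 'I_n | b < a.+1] \subset P.
    by apply/subsetP => b; rewrite inE ltnS => /downP; apply.
  by rewrite card_ord_lt.
apply: contraTT lt_aP => notPa.
have /subset_leq_card : P \subset [set b : 'I_n | b < a].
  by apply/subsetP => b Pb; rewrite inE ltnNge; apply: contra notPa => /downP; apply.
by rewrite (card_ord_lt (ltnW (ltn_ord a))) leqNgt.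
Qed.

Section CyclicShift.
Variable k : nat.
Hypothesis k_gt0 : 0 < k.

Definition shift (s : 'I_k) (a : nat) : 'I_k := Ordinal (ltn_pmod (s + a) k_gt0).
Definition offset (s j : 'I_k) : nat := (j + k - s) %% k.

Lemma offset_lt s j : offset s j < k.
Proof. exact: ltn_pmod. Qed.

Lemma offsetK s j : shift s (offset s j) = j.
Proof.
apply: val_inj => /=; rewrite modnDmr subnKC ?modnDr ?modn_small //.
by rewrite ltnW // ltn_addl.
Qed.

Lemma shiftK s a : a < k -> offset s (shift s a) = a.
Proof.
move=> lt_ak; rewrite /offset /= -addnBA ?(ltnW (ltn_ord s)) // modnDml.
by rewrite addnAC subnKC ?(ltnW (ltn_ord s)) // modnDl modn_small.
Qed.

Lemma offset_id s : offset s s = 0.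
Proof. by rewrite /offset addKn modnn. Qed.

Lemma shift0 s : shift s 0 = s.
Proof. by apply: val_inj; rewrite /= addn0 modn_small. Qed.

Lemma ord_pred_shiftS s a : ord_pred (shift s a.+1) = shift s a.
Proof.
apply: ordS_inj; rewrite ord_predK; apply: val_inj => /=.
by rewrite -[((s + a) %% k).+1]addn1 modnDml addn1 addnS.
Qed.

Lemma ord_pred_shift_last s : ord_pred s = shift s k.-1.
Proof.
rewrite -ord_pred_shiftS prednK //; congr ord_pred.
by apply: val_inj; rewrite /= modnDr modn_small.
Qed.

Lemma shift_ord_inj s : injective (fun a : 'I_k => shift s a).
Proof. by move=> a b /(congr1 (offset s)); rewrite !shiftK // => /val_inj. Qed.

Lemma offsetE s j : offset s j = if s <= j then j - s else j + k - s.
Proof.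
have lt_jk := ltn_ord j; case: (leqP s j) => [le_sj|lt_js].
  by rewrite /offset -addnBAC // modnDr modn_small // ltn_subLR // ltn_addl.
rewrite /offset modn_small // ltn_subLR ?ltn_add2r //.
exact: leq_trans (ltnW (ltn_ord s)) (leq_addl _ _).
Qed.

End CyclicShift.

Section Runs.
Variables (k t : nat) (l : 'I_k -> 'I_t).
Hypothesis k_gt0 : 0 < k.
Local Notation shift := (shift k_gt0).

Definition run_starts (i : 'I_t) : {set 'I_k} :=
  [set j | (l j == i) && (l (ord_pred j) != i)].

Lemma nocc_madj_starts i : nocc l i = madj l i + #|run_starts i|.
Proof.
rewrite /nocc -(cardsID [set j | l (ord_pred j) == i]); congr (_ + _).
  by apply: eq_card => j; rewrite !inE andbC.
by apply: eq_card => j; rewrite !inE andbC.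
Qed.

Lemma contiguousP i : contiguous l i <->
  exists s, forall a, a < k -> (l (shift s a) == i) = (a < nocc l i).
Proof.
split=> -[s hit]; exists s.
  by move=> a lt_ak; rewrite hit -/(offset _ _) shiftK.
by move=> j; rewrite -[j in l j](offsetK k_gt0 s j) hit ?offset_lt.
Qed.

Lemma hit_shift_subn s i a d :
    (forall b, 0 < b < k -> shift s b \notin run_starts i) -> a < k ->
  l (shift s a) == i -> l (shift s (a - d)) == i.
Proof.
move=> no_start lt_ak hit; elim: d => [|d IH]; first by rewrite subn0.
rewrite subnS; have [ad0|ad_gt0] := posnP (a - d); first by move: IH; rewrite ad0.
have : shift s (a - d) \notin run_starts i.
  by apply: no_start; rewrite ad_gt0 /=; apply: leq_ltn_trans lt_ak; apply: leq_subr.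
by rewrite inE IH /= negbK -{1}(prednK ad_gt0) ord_pred_shiftS.
Qed.

Lemma hit_shiftE s i :
    (forall b, 0 < b < k -> shift s b \notin run_starts i) ->
  forall a, a < k -> (l (shift s a) == i) = (a < nocc l i).
Proof.
move=> no_start a lt_ak; pose hits := [pred b : 'I_k | l (shift s b) == i].
have card_hits : #|hits| = nocc l i.
  rewrite /nocc -(card_preimset _ (shift_ord_inj (s := s))).
  by apply: eq_card => b; rewrite !inE.
rewrite -card_hits -(downclosed_ordE _ (Ordinal lt_ak)) // => b c le_cb hit_b.
by rewrite inE -(subKn le_cb) (hit_shift_subn _ no_start (ltn_ord b) hit_b).
Qed.

Lemma run_starts_gt0 i : 0 < nocc l i < k -> 0 < #|run_starts i|.
Proof.
case/andP=> n_gt0 n_ltk; rewrite card_gt0; apply: contraTneq n_ltk => no_start.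
have [j0] := card_gt0P n_gt0; rewrite inE => hit_j0.
have hit_pred : l (shift j0 k.-1) == i.
  have : j0 \notin run_starts i by rewrite no_start inE.
  by rewrite inE hit_j0 negbK ord_pred_shift_last.
have no_start_j0 b : 0 < b < k -> shift j0 b \notin run_starts i.
  by rewrite no_start inE.
have lt_k1k : k.-1 < k by rewrite ltn_predL.
have := hit_shiftE no_start_j0 lt_k1k; rewrite hit_pred => /esym lt_k1n.
by rewrite -leqNgt; apply: leq_trans lt_k1n; rewrite -ltnS prednK.
Qed.

Lemma contiguous_run_starts1 i :
  0 < nocc l i < k -> contiguous l i <-> #|run_starts i| = 1.
Proof.
case/andP=> n_gt0 n_ltk; rewrite contiguousP.
split=> [[s hit] | /eqP/cards1P[s starts_s]].
  apply/eqP/cards1P; exists s; apply/setP => j.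
  rewrite !inE -(offsetK k_gt0 s j).
  have lt_ak := offset_lt k_gt0 s j; set a := offset s j.
  rewrite hit //; have [a0|a_gt0] := posnP a.
    rewrite a0 shift0 eqxx ord_pred_shift_last n_gt0 hit ?ltn_predL //.
    by rewrite -leqNgt -ltnS prednK.
  have -> : (shift s a == s) = false.
    by apply/eqP => /(congr1 (offset s)); rewrite shiftK // offset_id; lia.
  have -> : ord_pred (shift s a) = shift s a.-1.
    by rewrite -{1}(prednK a_gt0) ord_pred_shiftS.
  rewrite hit; last exact: leq_ltn_trans (leq_pred a) _.
  by case: (ltnP a (nocc l i)) => // lt_an; rewrite (leq_ltn_trans (leq_pred a) lt_an).
exists s; apply: hit_shiftE => b /andP[b_gt0 lt_bk]; rewrite starts_s inE.
by apply/eqP => /(congr1 (offset s)); rewrite shiftK // offset_id; lia.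
Qed.

Definition single_runs : bool := [forall i in occurring l, #|run_starts i| == 1].

Definition balanced : bool :=
  let q := k %/ #|occurring l| in
  [forall i in occurring l, (nocc l i == q) || (nocc l i == q.+1)].

Lemma nocc_eq0 i : i \notin occurring l -> nocc l i = 0.
Proof. by rewrite inE lt0n negbK => /eqP. Qed.

Lemma sum_nocc : \sum_i nocc l i = k.
Proof.
rewrite -[RHS]card_ord -sum1_card (partition_big l predT) //=.
by apply: eq_bigr => i _; rewrite /nocc -sum1_card; apply: eq_bigl => j; rewrite inE.
Qed.

Lemma sum_occurring (F : 'I_t -> nat) :
  (forall i, i \notin occurring l -> F i = 0) ->
  \sum_(i in occurring l) F i = \sum_i F i.
Proof. exact: big_rmcond. Qed.

Lemma sum_madj_le : \sum_i madj l i <= k.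
Proof.
by rewrite -[leqRHS]sum_nocc; apply: leq_sum => i _; rewrite nocc_madj_starts leq_addr.
Qed.

Lemma card_occurring_le : #|occurring l| <= t.
Proof. by rewrite -[leqRHS]card_ord max_card. Qed.

Lemma occurring_gt0 : 0 < #|occurring l|.
Proof.
apply/card_gt0P; exists (l (Ordinal k_gt0)); rewrite inE.
by apply/card_gt0P; exists (Ordinal k_gt0); rewrite inE.
Qed.

Lemma nocc_range i : 2 <= #|occurring l| -> i \in occurring l -> 0 < nocc l i < k.
Proof.
move=> occ2 occ_i; have := occ_i; rewrite inE => -> /=.
have /card_gt0P[i' occ_i'] : 0 < #|occurring l :\ i|.
  by move: occ2; rewrite (cardsD1 i) occ_i.
move: occ_i'; rewrite !inE => /andP[ne_i'i n_i'_gt0].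
by have := sum_nocc; rewrite (bigD1 i) // (bigD1 i') //=; lia.
Qed.

Lemma sum_madj_leqif : 2 <= #|occurring l| ->
  \sum_i madj l i + #|occurring l| <= k ?= iff single_runs.
Proof.
move=> occ2.
have k_split : \sum_i madj l i + \sum_(i in occurring l) #|run_starts i| = k.
  rewrite sum_occurring => [|i /nocc_eq0 n_eq0]; last first.
    by apply/eqP; rewrite -leqn0 -n_eq0 nocc_madj_starts leq_addl.
  rewrite -big_split -[RHS]sum_nocc.
  by apply: eq_bigr => i _; rewrite nocc_madj_starts.
have starts_ge1 i : i \in occurring l ->
    1 <= #|run_starts i| ?= iff (#|run_starts i| == 1).
  by move=> occ_i; rewrite eq_sym; apply/leqif_eq/run_starts_gt0/nocc_range.
have := leqif_sum starts_ge1; rewrite sum1_card.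
by rewrite -(mono_leqif (leq_add2l (\sum_i madj l i))) k_split.
Qed.

Lemma single_runsP : 2 <= #|occurring l| ->
  reflect (forall i, i \in occurring l -> contiguous l i) single_runs.
Proof.
move=> occ2; apply: (iffP forall_inP) => runs i occ_i.
  by apply/(contiguous_run_starts1 (nocc_range occ2 occ_i))/eqP/runs.
exact/eqP/(contiguous_run_starts1 (nocc_range occ2 occ_i))/runs.
Qed.

Lemma sum_nocc_sqr_leqif :
  sumsq_min k #|occurring l| <= \sum_i nocc l i ^ 2 ?= iff balanced.
Proof.
have := sumsq_min_leqif (occurring l) (nocc l).
by rewrite /= !sum_occurring ?sum_nocc // => i /nocc_eq0 ->.
Qed.

Lemma balancedP : let q := k %/ #|occurring l| in
  reflect (forall i, i \in occurring l -> nocc l i = q \/ nocc l i = q.+1) balanced.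
Proof.
apply: (iffP forall_inP) => bal i /bal; first by case/orP=> /eqP; [left | right].
by case=> ->; rewrite eqxx ?orbT.
Qed.

Lemma card_nocc_succ : balanced ->
  let q := k %/ #|occurring l| in
  #|[set i in occurring l | nocc l i == q.+1]| = k - #|occurring l| * q.
Proof.
move=> /balancedP two_valued; have := sum_two_valued two_valued.
rewrite sum_occurring ?sum_nocc => [/=|i /nocc_eq0 //]; lia.
Qed.

Lemma card_nocc_eq : balanced ->
  let q := k %/ #|occurring l| in
  #|[set i in occurring l | nocc l i == q]| = #|occurring l| - (k - #|occurring l| * q).
Proof.
move=> bal q; rewrite (card_two_valued (n := nocc l) (q := q)) -?card_nocc_succ //.
exact/balancedP.
Qed.

End Runs.

Section BlockSeq.
Variables k t v : nat.
Hypotheses (v_ge2 : 2 <= v) (le_vk : v <= k) (le_vt : v <= t).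

Let v_gt0 : 0 < v. Proof. exact: ltnW v_ge2. Qed.
Let k_gt0 : 0 < k. Proof. exact: leq_trans v_gt0 le_vk. Qed.

Fact block_seq_subproof (j : 'I_k) : j * v %/ k < t.
Proof. by rewrite ltn_divLR //; have := ltn_ord j; nia. Qed.

Definition block_seq (j : 'I_k) : 'I_t := Ordinal (block_seq_subproof j).

(* [block_start a] is the ceiling of a k / v, the first position of treatment a. *)
Definition block_start (a : nat) : nat := (a * k + v - 1) %/ v.

Lemma ltn_block_start j a : (j < block_start a) = (j * v < a * k).
Proof. by rewrite /block_start -[j < _]/(j.+1 <= _) leq_divRL //; lia. Qed.

Lemma block_seqE j (a : 'I_t) :
  (block_seq j == a) = (block_start a <= j < block_start a.+1).
Proof.
rewrite -val_eqE /= eqn_leq -ltnS ltn_divLR // leq_divRL //.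
by rewrite ltn_block_start [block_start a <= j]leqNgt ltn_block_start -leqNgt andbC.
Qed.

Lemma block_start_v : block_start v = k.
Proof.
rewrite /block_start -addnBA // mulnC divnMDl // divn_small ?addn0 //.
by rewrite subn1 ltn_predL.
Qed.

Lemma leq_block_start : {homo block_start : a b / a <= b}.
Proof.
by move=> a b le_ab; rewrite leq_div2r // leq_sub2r // leq_add2r leq_mul2r le_ab orbT.
Qed.

Lemma block_start_step a :
  block_start a.+1 - block_start a = k %/ v + (v <= (a * k + v - 1) %% v + k %% v).
Proof.
rewrite /block_start (_ : a.+1 * k + v - 1 = a * k + v - 1 + k).
  by rewrite divnD // -addnA addKn.
by rewrite mulSn; lia.
Qed.

Lemma block_start_lt a : a < v -> block_start a < block_start a.+1 <= k.
Proof.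
move=> lt_av; rewrite -subn_gt0 block_start_step addn_gt0 divn_gt0 // le_vk /=.
by rewrite -block_start_v leq_block_start.
Qed.

Lemma nocc_block_seq (a : 'I_t) :
  nocc block_seq a = if a < v then block_start a.+1 - block_start a else 0.
Proof.
rewrite /nocc; have -> : [set j | block_seq j == a] =
                          [set j : 'I_k | block_start a <= j < block_start a.+1].
  by apply/setP => j; rewrite !inE block_seqE.
case: ltnP => [lt_av|le_va].
  by rewrite card_ord_between //; case/andP: (block_start_lt lt_av) => /ltnW -> ->.
apply/eqP; rewrite cards_eq0; apply/eqP/setP => j; rewrite !inE.
apply/negbTE; rewrite negb_and -ltnNge (leq_trans (ltn_ord j)) //.
by rewrite -block_start_v leq_block_start.
Qed.

Lemma occurring_block_seq : occurring block_seq = [set a : 'I_t | a < v].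
Proof.
apply/setP => a; rewrite !inE nocc_block_seq.
by case: ifP => // lt_av; rewrite subn_gt0; case/andP: (block_start_lt lt_av).
Qed.

Lemma card_occurring_block_seq : #|occurring block_seq| = v.
Proof. by rewrite occurring_block_seq card_ord_lt. Qed.

Lemma balanced_block_seq : balanced block_seq.
Proof.
apply/balancedP; rewrite card_occurring_block_seq => a.
rewrite occurring_block_seq inE nocc_block_seq => ->; rewrite block_start_step.
by case: leqP => _; [right; rewrite addn1 | left; rewrite addn0].
Qed.

Lemma single_runs_block_seq : single_runs block_seq.
Proof.
apply/single_runsP; rewrite ?card_occurring_block_seq // => a.
rewrite occurring_block_seq inE => lt_av; have := block_start_lt lt_av.
case/andP=> lt_start le_next; have lt_startk := leq_trans lt_start le_next.
exists (Ordinal lt_startk) => j; rewrite block_seqE nocc_block_seq lt_av.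
have := ltn_ord j; rewrite -/(offset _ _) offsetE /=.
by case: (leqP (block_start a) j); lia.
Qed.

End BlockSeq.

Local Open Scope ring_scope.

Section Values.
Variables (R : rcfType) (k : nat).
Hypothesis k_gt0 : (0 < k)%N.

Let kR_gt0 : 0 < k%:R :> R. Proof. by rewrite ltr0n. Qed.
Let kR_neq0 : k%:R != 0 :> R. Proof. exact: lt0r_neq0. Qed.

Lemma cvalE t (l : 'I_k -> 'I_t) :
  cval R l = (k%:R + (\sum_i madj l i)%:R) / 2 - (\sum_i nocc l i ^ 2)%:R / k%:R.
Proof. by rewrite /cval !natr_sum; field. Qed.

Lemma fvalE v : fval R k v = k%:R - v%:R / 2 - (sumsq_min k v)%:R / k%:R.
Proof.
rewrite /fval /sumsq_min; set q := (k %/ v)%N; set r := (k %% v)%N.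
have def_r : r%:R = k%:R - q%:R * v%:R :> R.
  by rewrite [in RHS](divn_eq k v) natrD natrM; ring.
by rewrite !(natrD, natrM) def_r; field.
Qed.

Lemma cval_leif_fval t (l : 'I_k -> 'I_t) : (2 <= #|occurring l|)%N ->
  cval R l <= fval R k #|occurring l| ?= iff balanced l && single_runs l.
Proof.
move=> occ2; set v := #|occurring l|.
set M := (\sum_i madj l i)%N; set S := (\sum_i nocc l i ^ 2)%N.
have S_leif : (sumsq_min k v)%:R / k%:R <= S%:R / k%:R ?= iff balanced l :> R.
  rewrite (mono_leif (ler_pM2r _)) ?invr_gt0 // leif_nat_r.
  exact: sum_nocc_sqr_leqif.
have M_leif : (M + v)%:R / 2 <= k%:R / 2 ?= iff single_runs l :> R.
  rewrite (mono_leif (ler_pM2r _)) ?invr_gt0 ?ltr0n // leif_nat_r.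
  exact: sum_madj_leqif.
have := leifD M_leif S_leif; rewrite andbC.
set X := (M + v)%:R / 2 + _; set Y := k%:R / 2 + _ => X_leif.
have -> : cval R l = fval R k v + X - Y by rewrite cvalE fvalE /X /Y natrD; field.
by rewrite leifBLR (mono_leif (lerD2l _)).
Qed.

Lemma cval_one_treatment_le0 t (l : 'I_k -> 'I_t) :
  #|occurring l| = 1%N -> cval R l <= 0.
Proof.
move=> occ1; have := sum_nocc_sqr_leqif l.
rewrite occ1 /sumsq_min divn1 modn1 mul1n mul0n addn0 => /leq_of_leqif.
rewrite -(ler_nat R) natrX => le_k2S.
have := sum_madj_le l; rewrite -(ler_nat R) => le_Mk.
rewrite cvalE subr_le0; apply: le_trans (_ : k%:R <= _).
  by rewrite ler_pdivrMr // mulr_natr mulr2n lerD2l.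
by rewrite ler_pdivlMr // -expr2.
Qed.

Lemma fval2_gt0 : (3 <= k)%N -> 0 < fval R k 2.
Proof.
move=> k_ge3; have := sumsq_min2_lt k_ge3.
rewrite -(ltr_nat R) natrM -subn1 natrB ?(leq_trans _ k_ge3) // => lt_Smin.
have : (sumsq_min k 2)%:R / k%:R < k%:R - 1 :> R by rewrite ltr_pdivrMr // mulrC.
rewrite fvalE; lra.
Qed.

Lemma fval_lt_fval_k w : (k < w)%N -> fval R k w < fval R k k.
Proof.
move=> lt_kw; have : k%:R < w%:R :> R by rewrite ltr_nat.
by rewrite !fvalE !sumsq_min_id ?(ltnW lt_kw) //; lra.
Qed.

Lemma fval_le_sqrt v : (0 < v)%N -> fval R k v <= k%:R - Num.sqrt (2 * k)%:R.
Proof.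
move=> v_gt0; have vR_gt0 : 0 < v%:R :> R by rewrite ltr0n.
have Smin_ge : k%:R / v%:R <= (sumsq_min k v)%:R / k%:R :> R.
  rewrite ler_pdivrMr // mulrAC ler_pdivlMr // -!natrM ler_nat mulnn mulnC.
  exact: sqr_leq_mul_sumsq_min.
have AMGM : Num.sqrt (2 * k)%:R <= v%:R / 2 + k%:R / v%:R :> R.
  have sum_ge0 : 0 <= v%:R / 2 + k%:R / v%:R :> R by rewrite addr_ge0 ?divr_ge0 ?ler0n.
  rewrite -(ger0_norm sum_ge0) -sqrtr_sqr ler_sqrt ?sqr_ge0 //.
  have -> : (v%:R / 2 + k%:R / v%:R) ^+ 2 =
            (v%:R / 2 - k%:R / v%:R) ^+ 2 + (2 * k)%:R :> R.
    by rewrite natrM; field; rewrite lt0r_neq0.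
  by rewrite lerDr sqr_ge0.
rewrite fvalE; lra.
Qed.

Lemma fval_sqrt n : (n ^ 2 = 2 * k)%N -> fval R k n = k%:R - Num.sqrt (2 * k)%:R.
Proof.
move=> sq_n; have [m def_n] : exists m, n = (2 * m)%N.
  exists n./2; rewrite mul2n -[LHS]odd_double_half.
  by have := congr1 odd sq_n; rewrite oddX oddM /= => ->.
have def_k : k = (2 * m * m)%N by nia.
have m_gt0 : (0 < m)%N by nia.
have -> : Num.sqrt (2 * k)%:R = n%:R :> R by rewrite -sq_n natrX sqrtr_sqr ger0_norm.
have Smin_eq : sumsq_min k n = (n * m ^ 2)%N.
  have q_eq : (k %/ n = m)%N by rewrite def_k def_n mulKn // muln_gt0.
  have r_eq : (k %% n = 0)%N by rewrite def_k def_n modnMr.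
  by rewrite /sumsq_min q_eq r_eq mul0n addn0.
have kR : k%:R = 2 * m%:R ^+ 2 :> R by rewrite def_k !natrM expr2 mulrA.
have m_neq0 : m%:R != 0 :> R by rewrite pnatr_eq0 -lt0n.
by rewrite fvalE Smin_eq def_n !natrM kR; field.
Qed.

End Values.

Section Maximum.
Variables (R : rcfType) (k t : nat).
Hypotheses (k_ge3 : (3 <= k)%N) (le_kt : (k <= t)%N).

Let k_gt0 : (0 < k)%N. Proof. exact: leq_trans k_ge3. Qed.
Let t_ge2 : (2 <= t)%N. Proof. exact: leq_trans (ltnW k_ge3) le_kt. Qed.

Definition fval_argmax (v : nat) : Prop :=
  (2 <= v <= t)%N /\ forall w, (2 <= w <= t)%N -> fval R k w <= fval R k v.

Lemma fval_argmax_exists : exists v, fval_argmax v.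
Proof.
have lt_2t1 : (2 < t.+1)%N by [].
have [v v_ge2 v_max] := @arg_maxP _ _ _ (Ordinal lt_2t1) (fun i : 'I_t.+1 => 2 <= i)%N
  (fun i => fval R k i) isT.
exists v; split=> [|w /andP[w_ge2 le_wt]]; first by rewrite v_ge2 -ltnS ltn_ord.
exact: (v_max (Ordinal (le_wt : (w < t.+1)%N))).
Qed.

Lemma fval_argmax_le_k v : fval_argmax v -> (v <= k)%N.
Proof.
case=> _ v_max; rewrite leqNgt; apply/negP => /(fval_lt_fval_k R k_gt0).
by rewrite ltNge v_max // (ltnW k_ge3).
Qed.

Lemma exists_cval_eq_fval v : (2 <= v <= t)%N -> (v <= k)%N ->
  exists l : 'I_k -> 'I_t, cval R l = fval R k v.
Proof.
case/andP=> v_ge2 le_vt le_vk; exists (block_seq v_ge2 le_vk le_vt).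
have occ_v := card_occurring_block_seq v_ge2 le_vk le_vt.
have occ2 : (2 <= #|occurring (block_seq v_ge2 le_vk le_vt)|)%N by rewrite occ_v.
have := eq_leif (cval_leif_fval R k_gt0 occ2).
by rewrite balanced_block_seq single_runs_block_seq occ_v => /eqP.
Qed.

Lemma cval_lt_fval_argmax_one v (l : 'I_k -> 'I_t) :
  fval_argmax v -> (#|occurring l| <= 1)%N -> cval R l < fval R k v.
Proof.
case=> _ v_max occ_le1.
have occ1 : #|occurring l| = 1%N by apply/eqP; rewrite eqn_leq occ_le1 occurring_gt0.
apply: le_lt_trans (cval_one_treatment_le0 R k_gt0 occ1) _.
apply: lt_le_trans (fval2_gt0 R k_gt0 k_ge3) _.
by apply: v_max; rewrite leqnn t_ge2.
Qed.

Lemma cval_le_fval_argmax v (l : 'I_k -> 'I_t) :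
  fval_argmax v -> cval R l <= fval R k v.
Proof.
move=> v_argmax; have [occ2|occ_le1] := ltnP 1 #|occurring l|.
  apply: le_trans (cval_leif_fval R k_gt0 occ2) (v_argmax.2 _ _).
  by rewrite occ2 card_occurring_le.
exact/ltW/cval_lt_fval_argmax_one.
Qed.

Lemma cval_maximalP (l : 'I_k -> 'I_t) :
  (forall l' : 'I_k -> 'I_t, cval R l' <= cval R l) <->
  [/\ fval_argmax #|occurring l|, balanced l & single_runs l].
Proof.
split=> [l_max | [v_max bal runs] l']; last first.
  have [/andP[occ2 _] _] := v_max.
  rewrite (eqTleif (cval_leif_fval R k_gt0 occ2)) ?bal ?runs //.
  exact: cval_le_fval_argmax.
have [vm vm_argmax] := fval_argmax_exists.
have [vm_range vm_max] := vm_argmax.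
have [lm cval_lm] := exists_cval_eq_fval vm_range (fval_argmax_le_k vm_argmax).
have fvm_le : fval R k vm <= cval R l by rewrite -cval_lm l_max.
have occ2 : (2 <= #|occurring l|)%N.
  rewrite ltnNge; apply/negP => /(cval_lt_fval_argmax_one vm_argmax).
  by rewrite ltNge fvm_le.
have occ_range : (2 <= #|occurring l| <= t)%N by rewrite occ2 card_occurring_le.
have [le_cf eq_cf] := cval_leif_fval R k_gt0 occ2.
have cval_eq : cval R l = fval R k #|occurring l|.
  by apply/eqP; rewrite eq_le le_cf (le_trans (vm_max _ occ_range) fvm_le).
have /andP[bal runs] : balanced l && single_runs l by rewrite -eq_cf cval_eq.
split=> //; split=> // w w_range; rewrite -cval_eq.
exact: le_trans (vm_max w w_range) fvm_le.
Qed.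

End Maximum.

Theorem proposition9 (R : rcfType) (t k : nat) (hk : (3 <= k)%N) (hkt : (k <= t)%N) :
  (forall l : 'I_k -> 'I_t,
     (forall l' : 'I_k -> 'I_t, cval R l' <= cval R l) <->
     (let vs := #|occurring l| in
      let nm := (k %/ vs)%N in
      let vp := (k - vs * nm)%N in
      [/\ (2 <= vs <= t)%N /\
            (forall w : nat, (2 <= w <= t)%N -> fval R k w <= fval R k vs),
          (forall i, i \in occurring l -> nocc l i = nm \/ nocc l i = nm.+1),
          #|[set i in occurring l | nocc l i == nm.+1]| = vp,
          #|[set i in occurring l | nocc l i == nm]| = (vs - vp)%N &
          (forall i, i \in occurring l -> contiguous l i)]))
  /\
  (forall vs : nat, (2 <= vs <= t)%N ->
     (forall w : nat, (2 <= w <= t)%N -> fval R k w <= fval R k vs) ->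
     [/\ (forall l : 'I_k -> 'I_t, cval R l <= fval R k vs),
         (exists l : 'I_k -> 'I_t, cval R l = fval R k vs),
         fval R k vs <= k%:R - Num.sqrt (2 * k)%N%:R &
         ((exists n : nat, (n ^ 2 = 2 * k)%N) ->
            fval R k vs = k%:R - Num.sqrt (2 * k)%N%:R)]).
Proof.
have k_gt0 : (0 < k)%N by apply: leq_trans hk.
split=> [l | vs vs_range vs_max].
  rewrite (cval_maximalP _ hk hkt).
  split=> [[v_max bal runs] | [v_max bal _ _ runs]].
    have [/andP[occ2 _] _] := v_max.
    split=> //.
    - exact/balancedP.
    - exact: card_nocc_succ.
    - exact: card_nocc_eq.
    - exact/single_runsP.
  have [/andP[occ2 _] _] := v_max.
  by split=> //; [apply/balancedP | apply/single_runsP].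
have vs_argmax : fval_argmax R k t vs by [].
have vs_gt0 : (0 < vs)%N by case/andP: vs_range => /ltnW.
split=> [l | | | [n sq_n]].
- exact: cval_le_fval_argmax.
- exact: exists_cval_eq_fval (fval_argmax_le_k hk hkt vs_argmax).
- exact: fval_le_sqrt.
apply/eqP; rewrite eq_le fval_le_sqrt //= -(fval_sqrt R k_gt0 sq_n) vs_max //.
by apply/andP; split; nia.
Qed.
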